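(* Let $n=p^k$, where $p$ is a prime and $k\ge2$, and let $G=\langle p^{k-1}+1\rangle$ be the subgroup of $\mathbb{Z}_n^\times$ generated by $p^{k-1}+1$. Then the coset index function $f_G$ is a $(p^k,\ 2p^{k-1}-p^{k-2},\ \{0,p^k-p^{k-1}\})$ zero-difference function.
   Context: For a subgroup $G$ of $\mathbb{Z}_n^\times$ and $r\in\mathbb{Z}_n$, the coset $rG=\{rg\mid g\in G\}$; these cosets partition $\mathbb{Z}_n$, forming a set $D_G$. The coset index function induced by $G$ is $f_G:\mathbb{Z}_n\to\mathbb{Z}_{|D_G|}$, $f_G(x)=h_G(C_x)$, where $C_x$ is the coset containing $x$ and $h_G:D_G\to\mathbb{Z}_{|D_G|}$ is a fixed bijection. A function $f:A\to B$ between finite abelian groups is an $(n,m,S)$ zero-difference function if $n=|A|$, $m=|f(A)|$, and for every nonzero $a\in A$, $|\{x\in A\mid f(x+a)=f(x)\}|\in S$. Here $A=(\mathbb{Z}_n,+)$. *)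

From HB Require Import structures.
From mathcomp Require Import all_boot all_order all_algebra all_fingroup.
Set Implicit Arguments. Unset Strict Implicit. Unset Printing Implicit Defensive.
Import GRing.Theory.
Local Open Scope ring_scope.

Definition Zcoset (n : nat) (G : {set {unit 'Z_n}}) (r : 'Z_n) : {set 'Z_n} :=
  [set r * val g | g in G].

Definition Zcosets (n : nat) (G : {set {unit 'Z_n}}) : {set {set 'Z_n}} :=
  [set Zcoset G r | r : 'Z_n].

Definition coset_index_fun (n : nat) (G : {set {unit 'Z_n}})
    (h : {set 'Z_n} -> 'I_#|Zcosets G|) (x : 'Z_n) : 'I_#|Zcosets G| :=
  h (Zcoset G x).

(* f : A -> B is an (n, m, S) zero-difference function. Only equality in B is
   used by the definition, so B is any finite type. *)
Definition zero_difference (A : finZmodType) (B : finType) (f : A -> B)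
    (n m : nat) (S : seq nat) : Prop :=
  [/\ #|A| = n, #|f @: [set: A]| = m &
      forall a : A, a != 0 -> #|[set x : A | f (x + a) == f x]| \in S].

From HB Require Import structures.
From mathcomp Require Import all_boot all_order all_algebra all_fingroup.
From mathcomp Require Import zify.
Import GRing.Theory.

Set Implicit Arguments. Unset Strict Implicit. Unset Printing Implicit Defensive.

(* Write q = p^(k-1) and N = p^k. Since N divides q^2, the generator u = 1 + q
   satisfies u^i = 1 + i q in Z_N, so the coset of x is x + x q Z. If p | x then
   x q = 0 and the coset is {x}; otherwise x is a unit and the coset is the whole
   residue class of x modulo q. Hence there are p^(k-1) singleton cosets and
   phi(p^(k-1)) = p^(k-1) - p^(k-2) residue classes, and for a <> 0 the points x
   and x + a lie in the same coset iff p does not divide x and q divides a, which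
   happens for phi(p^k) = p^k - p^(k-1) values of x, or for none. *)

Lemma expr1D_sqr0 (R : pzRingType) (e : R) (i : nat) :
  (e * e = 0 -> (1 + e) ^+ i = 1 + e *+ i)%R.
Proof.
move=> e2_0; elim: i => [|i IHi]; first by rewrite expr0 mulr0n addr0.
by rewrite exprSr IHi mulrDl mul1r mulrDr mulr1 mulrnAl e2_0 mul0rn addr0 mulrS addrA.
Qed.

Lemma prime_expn_gt1 p k : prime p -> 0 < k -> 1 < p ^ k.
Proof. by move=> p_pr k_gt0; rewrite -(expn0 p) ltn_exp2l ?prime_gt1. Qed.

Lemma count_coprime_iota n : count (coprime n) (iota 0 n) = totient n.
Proof.
rewrite totient_count_coprime /index_iota subn0 -sum1_count big_mkcond /=.
by apply: eq_bigr => d _; case: coprime.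
Qed.

Lemma count_predC_dvdn_iota_pfactor p j : prime p -> 0 < j ->
  count (predC (dvdn p)) (iota 0 (p ^ j)) = p ^ j - p ^ (j - 1).
Proof.
move=> p_pr j_gt0; rewrite -(eq_count (a1 := coprime (p ^ j))) => [|i]; last first.
  by rewrite /= coprime_pexpl // prime_coprime.
rewrite count_coprime_iota totient_pfactor // -{2}(prednK j_gt0) expnS.
by rewrite -!subn1 mulnBl mul1n.
Qed.

Lemma count_dvdn_iota_pfactor p j : prime p -> 0 < j ->
  count (dvdn p) (iota 0 (p ^ j)) = p ^ (j - 1).
Proof.
move=> p_pr j_gt0; have := count_predC (dvdn p) (iota 0 (p ^ j)).
rewrite count_predC_dvdn_iota_pfactor // size_iota.
have : p ^ (j - 1) <= p ^ j by rewrite leq_pexp2l ?prime_gt0 ?leq_subr.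
lia.
Qed.

Section ZpArithmetic.
Local Open Scope ring_scope.
Variable N : nat.
Hypothesis N_gt1 : (1 < N)%N.

Lemma card_Zp_ord : #|'Z_N| = N.
Proof. by rewrite card_ord Zp_cast. Qed.

Lemma ltn_valZp (x : 'Z_N) : (val x < N)%N.
Proof. by have := ltn_ord x; rewrite [X in (_ < X)%N -> _]Zp_cast. Qed.

Lemma card_Zp_pred (P : pred nat) :
  #|[set x : 'Z_N | P (val x)]| = count P (iota 0 N).
Proof.
rewrite -sum1_card (eq_bigl (fun x : 'Z_N => P (val x))) => [|x]; last by rewrite inE.
rewrite -[in RHS](Zp_cast N_gt1) -sum1_count.
by rewrite -(big_mkord P (fun=> 1%N)) /index_iota subn0.
Qed.

Lemma val_ZpD (x y : 'Z_N) : val (x + y) = ((val x + val y) %% N)%N.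
Proof. by rewrite /= [in X in (_ %% X)%N = _]Zp_cast. Qed.

Lemma Zp_natr_eq0 n : ((n%:R : 'Z_N) == 0) = (N %| n)%N.
Proof. by rewrite -val_eqE /= val_Zp_nat. Qed.

Lemma Zp_mulrn_val (x y : 'Z_N) : y *+ val x = x * y.
Proof. by rewrite -mulr_natl natr_Zp. Qed.

Lemma Zp_unitE (x : 'Z_N) : (x \is a GRing.unit) = coprime N (val x).
Proof. by rewrite -unitZpE // natr_Zp. Qed.

Lemma Zp_eqmodP d (x y : 'Z_N) : (d %| N)%N ->
  reflect (exists j, y = x + d%:R *+ j) (val y == val x %[mod d]).
Proof.
move=> dvd_dN; have shiftE j : x + d%:R *+ j = (val x + d * j)%N%:R.
  by rewrite -mulrnA natrD natr_Zp.
apply: (iffP eqP) => [y_eq_x | [j ->]]; last first.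
  by rewrite shiftE /= val_Zp_nat // (modn_dvdm _ dvd_dN) addnC mulnC modnMDl.
have x_le : (val x <= val y + N)%N by rewrite ltnW // ltn_addl // ltn_valZp.
have dvd_d : (d %| val y + N - val x)%N.
  by rewrite -eqn_mod_dvd // -modnDmr (eqP dvd_dN) addn0 y_eq_x.
exists ((val y + N - val x) %/ d)%N.
rewrite shiftE mulnC divnK // subnKC // natrD natr_Zp.
by rewrite (eqP (_ : N%:R == 0 :> 'Z_N)) ?addr0 // Zp_natr_eq0.
Qed.

End ZpArithmetic.

Section Cosets.
Local Open Scope ring_scope.
Variables (n : nat) (G : {group {unit 'Z_n}}).

Lemma Zcoset_refl (x : 'Z_n) : x \in Zcoset G x.
Proof. by apply/imsetP; exists 1%g; rewrite ?group1 // FinRing.val_unit1 mulr1. Qed.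

Lemma Zcoset_trans (x y : 'Z_n) : y \in Zcoset G x -> Zcoset G y = Zcoset G x.
Proof.
case/imsetP=> g Gg ->; apply/setP=> z.
apply/imsetP/imsetP=> [[g' Gg' ->] | [g' Gg' ->]].
  by exists (g * g')%g; rewrite ?groupM // FinRing.val_unitM mulrA.
exists (g^-1 * g')%g; rewrite ?groupM ?groupV //.
by rewrite -mulrA -FinRing.val_unitM mulKVg.
Qed.

Lemma eq_Zcoset (x y : 'Z_n) : (Zcoset G x == Zcoset G y) = (y \in Zcoset G x).
Proof. by apply/eqP/idP=> [-> | /Zcoset_trans ->]; first exact: Zcoset_refl. Qed.

Variable h : {set 'Z_n} -> 'I_#|Zcosets G|.
Hypothesis h_inj : {in Zcosets G &, injective h}.

Lemma coset_index_funE (x y : 'Z_n) :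
  (coset_index_fun h x == coset_index_fun h y) = (y \in Zcoset G x).
Proof.
rewrite /coset_index_fun -eq_Zcoset; apply/eqP/eqP=> [/h_inj | -> //].
by apply; apply/imsetP; [exists x | exists y].
Qed.

Lemma card_coset_index_fun_image :
  #|coset_index_fun h @: [set: 'Z_n]| = #|Zcosets G|.
Proof.
have cosetsE : Zcoset G @: [set: 'Z_n] = Zcosets G.
  by apply/setP=> C; apply/imsetP/imsetP=> [[x _ ->] | [x _ ->]]; exists x.
by rewrite (imset_comp h (Zcoset G)) cosetsE card_in_imset.
Qed.

Lemma card_coset_index_fun_shift (a : 'Z_n) :
  #|[set x | coset_index_fun h (x + a) == coset_index_fun h x]| =
  #|[set x | x + a \in Zcoset G x]|.
Proof. by apply: eq_card => x; rewrite !inE eq_sym coset_index_funE. Qed.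

End Cosets.

Lemma Zcoset_cycleP n (u : {unit 'Z_n}) (x y : 'Z_n) :
  reflect (exists i, y = x * val u ^+ i)%R (y \in Zcoset <[u]>%g x).
Proof.
apply: (iffP imsetP) => [[g /cycleP[i ->] ->] | [i ->]].
  by exists i; rewrite FinRing.val_unitX.
by exists (u ^+ i)%g; rewrite ?mem_cycle ?FinRing.val_unitX.
Qed.

Section PrimePowerCosets.
Local Open Scope ring_scope.
Variables (p k : nat) (u : {unit 'Z_(p ^ k)}).
Hypotheses (p_pr : prime p) (k_ge2 : (2 <= k)%N)
  (u_def : val u = (p ^ (k - 1)).+1%:R).

Local Notation N := (p ^ k)%N.
Local Notation q := (p ^ (k - 1))%N.

Let p_gt0 : (0 < p)%N. Proof. exact: prime_gt0. Qed.
Let N_gt1 : (1 < N)%N. Proof. by rewrite prime_expn_gt1 //; lia. Qed.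
Let pq_eq_N : (p * q = N)%N. Proof. by rewrite -expnS; congr (p ^ _)%N; lia. Qed.
Let q_dvd_N : (q %| N)%N. Proof. by rewrite -pq_eq_N dvdn_mull. Qed.
Let p_dvd_q : (p %| q)%N. Proof. by rewrite dvdn_exp //; lia. Qed.
Let q_lt_N : (q < N)%N.
Proof. by rewrite -pq_eq_N ltn_Pmull ?prime_gt1 ?expn_gt0 ?p_gt0. Qed.

Lemma val_cycle_expr i : val (u ^+ i)%g = 1 + q%:R *+ i.
Proof.
rewrite FinRing.val_unitX u_def -nat1r expr1D_sqr0 // -natrM.
by apply/eqP; rewrite Zp_natr_eq0 // -expnD; apply: dvdn_exp2l; lia.
Qed.

Lemma mem_Zcoset_cycleP (x y : 'Z_N) :
  reflect (exists i, y = x + (x * q%:R) *+ i) (y \in Zcoset <[u]>%g x).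
Proof.
apply: (iffP (Zcoset_cycleP u x y)) => -[i ->]; exists i;
  by rewrite -FinRing.val_unitX val_cycle_expr mulrDr mulr1 -mulrnAr.
Qed.

Lemma mem_Zcoset_cycle (x y : 'Z_N) :
  (y \in Zcoset <[u]>%g x) =
  if (p %| val x)%N then y == x else (val y == val x %[mod q])%N.
Proof.
case: ifPn => [p_dvd_x | p_ndvd_x].
  have xq0 : x * q%:R = 0.
    apply/eqP; rewrite -Zp_mulrn_val -mulrnA Zp_natr_eq0 //.
    by rewrite -[X in (X %| _)%N]pq_eq_N mulnC dvdn_mul.
  apply/mem_Zcoset_cycleP/eqP => [[i ->] | ->]; first by rewrite xq0 mul0rn addr0.
  by exists 0%N; rewrite mulr0n addr0.
apply/mem_Zcoset_cycleP/(Zp_eqmodP N_gt1 _ _ q_dvd_N) => [[i ->] | [j ->]].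
  by exists (val x * i)%N; rewrite mulrnA Zp_mulrn_val.
have x_unit : x \is a GRing.unit.
  by rewrite Zp_unitE // coprime_pexpl ?prime_coprime //; lia.
by exists (val x^-1 * j)%N; rewrite mulrnA Zp_mulrn_val mulKr.
Qed.

Lemma mem_Zcoset_cycle_shift (x a : 'Z_N) : a != 0 ->
  (x + a \in Zcoset <[u]>%g x) = ~~ (p %| val x)%N && (q %| val a)%N.
Proof.
move=> a_neq0; rewrite mem_Zcoset_cycle; case: ifP => _.
  by rewrite -[X in _ == X]addr0 (inj_eq (addrI x)) (negbTE a_neq0).
by rewrite val_ZpD // modn_dvdm // -[X in (_ == X %[mod q])%N]addn0 eqn_modDl mod0n.
Qed.

Lemma card_Zcoset_cycle_shift (a : 'Z_N) : a != 0 ->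
  #|[set x | x + a \in Zcoset <[u]>%g x]| = if (q %| val a)%N then (N - q)%N else 0%N.
Proof.
move=> a_neq0.
rewrite (eq_card (B := [set x : 'Z_N | predC (dvdn p) (val x) && (q %| val a)%N]));
  last by move=> x; rewrite !inE mem_Zcoset_cycle_shift.
case: ifP => _; last by apply: eq_card0 => x; rewrite !inE andbF.
rewrite (eq_card (B := [set x : 'Z_N | predC (dvdn p) (val x)]));
  last by move=> x; rewrite !inE andbT.
by rewrite card_Zp_pred // count_predC_dvdn_iota_pfactor //; lia.
Qed.

Definition cycle_coset_reps : {set 'Z_N} :=
  [set x : 'Z_N | (p %| val x)%N || (val x < q)%N].

Lemma Zcosets_cycleE : Zcosets <[u]>%g = Zcoset <[u]>%g @: cycle_coset_reps.
Proof.
apply/setP=> C; apply/imsetP/imsetP=> [[x _ ->] | [x _ ->]]; last by exists x.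
have [p_dvd_x | p_ndvd_x] := boolP (p %| val x)%N.
  by exists x; rewrite ?inE ?p_dvd_x.
have x_mod_lt : (val x %% q < q)%N by rewrite ltn_mod expn_gt0 p_gt0.
have val_rx : val ((val x %% q)%:R : 'Z_N) = (val x %% q)%N.
  by rewrite /= val_Zp_nat // modn_small // (ltn_trans x_mod_lt).
exists ((val x %% q)%:R); first by rewrite inE val_rx x_mod_lt orbT.
by apply/eqP; rewrite eq_Zcoset mem_Zcoset_cycle (negbTE p_ndvd_x) val_rx modn_mod.
Qed.

Lemma Zcoset_cycle_inj : {in cycle_coset_reps &, injective (Zcoset <[u]>%g)}.
Proof.
move=> x y; rewrite !inE => x_rep y_rep /eqP; rewrite eq_Zcoset mem_Zcoset_cycle.
case: ifPn => [_ /eqP // | p_ndvd_x y_eq_x].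
have p_ndvd_y : ~~ (p %| val y)%N.
  by rewrite /dvdn -(modn_dvdm _ p_dvd_q) (eqP y_eq_x) modn_dvdm.
rewrite (negbTE p_ndvd_x) in x_rep; rewrite (negbTE p_ndvd_y) in y_rep.
by apply: val_inj; rewrite -(modn_small x_rep) -(modn_small y_rep) (eqP y_eq_x).
Qed.

Lemma card_cycle_coset_reps : #|cycle_coset_reps| = (2 * q - p ^ (k - 2))%N.
Proof.
rewrite (card_Zp_pred N_gt1 (predU (dvdn p) (gtn q))).
have below_qE : filter (gtn q) (iota 0 N) = iota 0 q.
  by have := filter_iota_ltn 0 (ltnW q_lt_N).
have := count_predUI (dvdn p) (gtn q) (iota 0 N).
rewrite -count_filter below_qE -(size_filter (gtn q)) below_qE size_iota.
rewrite !count_dvdn_iota_pfactor ?subn_gt0 ?(ltnW k_ge2) // (_ : k - 1 - 1 = k - 2)%N;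
  lia.
Qed.

Lemma card_Zcosets_cycle : #|Zcosets <[u]>%g| = (2 * q - p ^ (k - 2))%N.
Proof.
rewrite Zcosets_cycleE card_in_imset ?card_cycle_coset_reps //.
exact: Zcoset_cycle_inj.
Qed.

End PrimePowerCosets.

Theorem proposition3p8 (p k : nat) (u : {unit 'Z_(p ^ k)}) :
  prime p -> (2 <= k)%N ->
  val u = (((p ^ (k - 1)).+1)%:R)%R ->
  forall h : {set 'Z_(p ^ k)} -> 'I_#|Zcosets <[u]>%g|,
    {in Zcosets <[u]>%g &, injective h} ->
    h @: Zcosets <[u]>%g = [set: 'I_#|Zcosets <[u]>%g|] ->
    zero_difference (coset_index_fun h) (p ^ k)
      (2 * p ^ (k - 1) - p ^ (k - 2)) [:: 0%N; (p ^ k - p ^ (k - 1))%N].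
Proof.
move=> p_pr k_ge2 u_def h h_inj _.
have N_gt1 : 1 < p ^ k by rewrite prime_expn_gt1 //; lia.
split.
- exact: card_Zp_ord.
- by rewrite card_coset_index_fun_image // card_Zcosets_cycle.
(* The finType structure on Z_(p^k) here comes from finZmodType, hence the
   pattern-guided rewrite. *)
move=> a a_neq0.
rewrite [#|_|](card_coset_index_fun_shift h_inj a) card_Zcoset_cycle_shift //.
by case: ifP; rewrite !inE eqxx ?orbT.
Qed.
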